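(* Let $\rhd$ be a value system, let $\mathcal{I}$ be an assignment that is admissible for $\rhd$, and let $\theta$ be a substitution such that $\theta x\rhd\mathcal{I}x$ for all $x\in\mathrm{Dom}\,\theta$. Then for every term $s$, $\hat{\mathcal{I}}$ is defined on $s$ and $\hat\theta s\rhd\hat{\mathcal{I}}s$.
   Context: Types: a countable set of base types ($\beta$); every base type is a type and $\sigma\tau$ is a type (functions from $\sigma$ to $\tau$) for types $\sigma,\tau$. Countably many names, each with a unique type, infinitely many of each type. Terms: names; $st:\mu$ for $s:\tau\mu,t:\tau$; $\lambda x.t:\sigma\tau$ for a name $x:\sigma$, $t:\tau$. $\mathrm{Wff}_\sigma$: terms of type $\sigma$. A frame $\mathcal{D}$ maps types to nonempty sets with $\mathcal{D}(\sigma\tau)\subseteq(\mathcal{D}\sigma\to\mathcal{D}\tau)$. An assignment $\mathcal{I}$ into $\mathcal{D}$ extends $\mathcal{D}$ and maps each name $x:\sigma$ into $\mathcal{D}\sigma$; $\mathcal{I}^x_a$ is the update at $x$. Partial evaluation: $\hat{\mathcal{I}}x=\mathcal{I}x$; $\hat{\mathcal{I}}(st)=(\hat{\mathcal{I}}s)(\hat{\mathcal{I}}t)$ when both are defined; $\hat{\mathcal{I}}(\lambda x.s)=f$ if $\lambda x.s:\sigma\tau$, $f\in\mathcal{D}(\sigma\tau)$ and $\widehat{\mathcal{I}^x_a}s=fa$ for all $a\in\mathcal{D}\sigma$ (undefined otherwise). An interpretation is an assignment whose evaluation is total. Normalization: a fixed type-preserving total $[\cdot]$ on terms with (N1) $[[s]]=[s]$;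 (N2) $[[s]t]=[st]$; (N3) $[xs_1\dots s_n]=x[s_1]\dots[s_n]$ for a name $x$, $n\ge0$, $xs_1\dots s_n$ of base type; (N4) $\hat{\mathcal{I}}[s]=\hat{\mathcal{I}}s$ for every interpretation $\mathcal{I}$. A substitution is a type-preserving partial function $\theta$ from names to terms ($\theta^x_s$ the update); every substitution extends to a type-preserving total $\hat\theta$ with (S1) $\hat\theta x=\theta x$ if $x\in\mathrm{Dom}\theta$, else $x$; (S2) $\hat\theta(st)=(\hat\theta s)(\hat\theta t)$; (S3) $[(\hat\theta(\lambda x.s))t]=[\widehat{\theta^x_t}s]$; (S4) $[\hat\emptyset s]=[s]$. A value system is a function $\rhd$ mapping each base type $\beta$ to a binary relation $\rhd_\beta$ with $\mathrm{Dom}(\rhd_\beta)\subseteq\mathrm{Wff}_\beta$ such that $s\rhd_\beta a$ iff $[s]\rhd_\beta a$; extended by $\mathcal{D}\sigma:=\mathrm{Ran}(\rhd_\sigma)$ and $\rhd_{\sigma\tau}:=\{(s,f)\in\mathrm{Wff}_{\sigma\tau}\times(\mathcal{D}\sigma\to\mathcal{D}\tau):\forall(t,a)\in\rhd_\sigma,\ (st,fa)\in\rhd_\tau\}$. An assignment $\mathcal{I}$ is admissible for $\rhd$ if $\mathcal{I}\sigma=\mathcal{D}\sigma$ for all types $\sigma$ and $x\rhd\mathcal{I}x$ for all names $x$. *)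

From mathcomp Require Import ssreflect ssrfun ssrbool eqtype choice.
From Stdlib Require Import FunctionalExtensionality ProofIrrelevance.

Set Implicit Arguments.
Unset Strict Implicit.

Section Syntax.
Variable B : countType.

Inductive ty : Type :=
| Base : B -> ty
| Arr : ty -> ty -> ty.

Definition ty_eq_dec (s t : ty) : {s = t} + {s <> t}.
Proof. decide equality. exact: eq_comparable. Defined.

(* Names: the name (sigma, n) has type sigma; infinitely many per type,
   countably many in total.  Terms are intrinsically typed:
   term sigma = Wff_sigma. *)
Inductive term : ty -> Type :=
| tvar (s : ty) (n : nat) : term s
| tapp (s t : ty) : term (Arr s t) -> term s -> term t
| tlam (s t : ty) (n : nat) : term t -> term (Arr s t).

Definition cast_term (s t : ty) (e : s = t) (u : term s) : term t :=
  eq_rect s term u t e.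

(* Argument spines  s_1 ... s_k  taking a head of type sigma to type rho. *)
Inductive args : ty -> ty -> Type :=
| anil (r : ty) : args r r
| acons (s t r : ty) : term s -> args t r -> args (Arr s t) r.

Fixpoint apply_args (s r : ty) (h : term s) (a : args s r) : term r :=
  match a in args s r return term s -> term r with
  | anil _ => fun h => h
  | acons _ _ _ u a' => fun h => apply_args (tapp h u) a'
  end h.

Fixpoint map_args (f : forall s, term s -> term s) (s r : ty) (a : args s r)
  : args s r :=
  match a with
  | anil r => anil r
  | acons _ _ _ u a' => acons (f _ u) (map_args f a')
  end.

(* Frames: D sigma nonempty-free carrier, with D (sigma tau) a subset of the
   function space D sigma -> D tau, represented by an extensional
   application map. *)
Record frame := Frame {
  fdom : ty -> Type;
  fapp : forall s t, fdom (Arr s t) -> fdom s -> fdom t;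
  fext : forall s t (f g : fdom (Arr s t)),
           (forall a, fapp f a = fapp g a) -> f = g
}.

Definition assignment (F : frame) := forall s : ty, nat -> fdom F s.

Definition aupd (F : frame) (I : assignment F) (s : ty) (n : nat) (a : fdom F s)
  : assignment F :=
  fun t m =>
    match ty_eq_dec s t with
    | left e => if Nat.eqb m n
                then eq_rect s (fdom F) a t e
                else I t m
    | right _ => I t m
    end.

(* Partial evaluation \hat I, as its graph:  evalP I s v  means
   "\hat I is defined on s and \hat I s = v". *)
Fixpoint evalP (F : frame) (I : assignment F) (s : ty) (u : term s)
  : fdom F s -> Prop :=
  match u in term s return fdom F s -> Prop with
  | tvar s n => fun v => v = I s n
  | tapp s t u1 u2 => fun v =>
      exists (f : fdom F (Arr s t)) (a : fdom F s),
        evalP I u1 f /\ evalP I u2 a /\ v = fapp f a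
  | tlam s t n u1 => fun f =>
      forall a : fdom F s, evalP (aupd I n a) u1 (fapp f a)
  end.

Definition interpretation (F : frame) (I : assignment F) : Prop :=
  forall (s : ty) (u : term s), exists v, evalP I u v.

Definition is_normalization (nf : forall s, term s -> term s) : Prop :=
  (forall s (u : term s), nf s (nf s u) = nf s u) /\
  (forall s t (u : term (Arr s t)) (w : term s),
      nf t (tapp (nf _ u) w) = nf t (tapp u w)) /\
  (forall s n (b : B) (a : args s (Base b)),
      nf _ (apply_args (tvar s n) a) = apply_args (tvar s n) (map_args nf a)) /\
  (forall (F : frame) (I : assignment F), interpretation I ->
     forall s (u : term s) (v : fdom F s), evalP I (nf s u) v <-> evalP I u v).

Definition subst := forall s : ty, nat -> option (term s).

Definition sempty : subst := fun _ _ => None.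

Definition supd (th : subst) (s : ty) (n : nat) (u : term s) : subst :=
  fun t m =>
    match ty_eq_dec s t with
    | left e => if Nat.eqb m n then Some (cast_term e u) else th t m
    | right _ => th t m
    end.

Definition is_subst_ext (nf : forall s, term s -> term s)
  (hat : subst -> forall s, term s -> term s) : Prop :=
  (forall th s n, hat th s (tvar s n) =
      match th s n with Some u => u | None => tvar s n end) /\
  (forall th s t (u : term (Arr s t)) (w : term s),
      hat th t (tapp u w) = tapp (hat th _ u) (hat th _ w)) /\
  (forall th s t n (u : term t) (w : term s),
      nf t (tapp (hat th _ (tlam s n u)) w) = nf t (hat (supd th n w) t u)) /\
  (forall s (u : term s), nf s (hat sempty s u) = nf s u).

(* Value systems.  V b is the (arbitrary) collection from which base values
   at base type b are drawn; vsb b is the relation |>_b. *)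
Section ValueSystem.
Variable V : B -> Type.
Variable vsb : forall b : B, term (Base b) -> V b -> Prop.

(* VS sigma = (ambient carrier, |>_sigma); D sigma = Ran |>_sigma. *)
Fixpoint VS (s : ty) : {X : Type & term s -> X -> Prop} :=
  match s return {X : Type & term s -> X -> Prop} with
  | Base b => existT _ (V b) (vsb (b:=b))
  | Arr s1 s2 =>
      let D1 := {x : projT1 (VS s1) | exists u, projT2 (VS s1) u x} in
      let D2 := {x : projT1 (VS s2) | exists u, projT2 (VS s2) u x} in
      existT (fun X => term (Arr s1 s2) -> X -> Prop) (D1 -> D2)
        (fun (u : term (Arr s1 s2)) (f : D1 -> D2) =>
           forall (w : term s1) (a : D1),
             projT2 (VS s1) w (proj1_sig a) ->
             projT2 (VS s2) (tapp u w) (proj1_sig (f a)))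
  end.

Definition vrel (s : ty) : term s -> projT1 (VS s) -> Prop := projT2 (VS s).

Definition Dval (s : ty) : Type := {x : projT1 (VS s) | exists u, vrel u x}.

Definition Dapp (s t : ty) (f : Dval (Arr s t)) (a : Dval s) : Dval t :=
  proj1_sig f a.

Lemma Dext (s t : ty) (f g : Dval (Arr s t)) :
  (forall a, Dapp f a = Dapp g a) -> f = g.
Proof.
move=> H; destruct f as [f Hf], g as [g Hg].
have E : f = g by apply: functional_extensionality; exact: H.
subst g; f_equal; apply: proof_irrelevance.
Qed.

Definition vframe : frame := @Frame Dval Dapp Dext.

Definition value_system (nf : forall s, term s -> term s) : Prop :=
  forall (b : B) (u : term (Base b)) (a : V b), vsb u a <-> vsb (nf _ u) a.

(* I sigma = D sigma holds by typing; x |> I x for every name x. *)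
Definition admissible (I : assignment vframe) : Prop :=
  forall (s : ty) (n : nat), vrel (tvar s n) (proj1_sig (I s n)).

End ValueSystem.
End Syntax.

(** A logical-relations argument: strengthen the claim to every assignment
    [I] and substitution [th] that are related pointwise on all names
    (including names outside [Dom th], where [hat th] is the identity), and
    induct on the term.  For [lam x. u] the value is the function sending
    [a] to the (unique) value of [u] under [I^x_a]; it is related to
    [hat th (lam x. u)] because, by S3 and N2, [|>] is closed under the
    beta-expansion [hat th^x_w u ~> (hat th (lam x. u)) w]. *)

From mathcomp Require Import ssreflect ssrfun ssrbool eqtype choice.
From Stdlib Require Import ClassicalEpsilon PeanoNat.

Section SubstitutionLemma.
Variable B : countType.
Variable V : B -> Type.
Variable vsb : forall b : B, term (Base b) -> V b -> Prop.

Local Notation vrel := (vrel (vsb:=vsb)).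
Local Notation Dval := (Dval vsb).

Lemma evalP_functional {I : assignment (vframe vsb)} {s : ty B} {u : term s}
  {v1 v2 : Dval s} : evalP I u v1 -> evalP I u v2 -> v1 = v2.
Proof.
move: I v1 v2; elim: u => [s0 n|s0 t u1 IH1 u2 IH2|s0 t n u1 IH] I v1 v2 /=.
- by move=> -> ->.
- move=> [f1 [a1 [Hf1 [Ha1 ->]]]] [f2 [a2 [Hf2 [Ha2 ->]]]].
  by rewrite (IH1 _ _ _ Hf1 Hf2) (IH2 _ _ _ Ha1 Ha2).
- move=> H1 H2; apply: Dext => a; exact: IH (H1 a) (H2 a).
Qed.

Variable nf : forall s : ty B, term s -> term s.
Hypothesis nf_tapp_nf : forall s t (u : term (Arr s t)) (w : term s),
  nf t (tapp (nf _ u) w) = nf t (tapp u w).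
Hypothesis vs_nf : value_system vsb nf.

Lemma vrel_nf (t : ty B) (u : term t) (x : projT1 (VS vsb t)) :
  vrel u x <-> vrel (nf t u) x.
Proof.
elim: t u x => [b|s _ t IHt] u x; first exact: vs_nf.
rewrite /vrel /=; split=> Hu w a Hw; apply: (proj2 (IHt _ _)).
- by rewrite nf_tapp_nf; apply: (proj1 (IHt _ _)); exact: Hu.
- by rewrite -nf_tapp_nf; apply: (proj1 (IHt _ _)); exact: Hu.
Qed.

Variable hat : subst B -> forall s : ty B, term s -> term s.
Hypothesis hat_var : forall th s n,
  hat th s (tvar s n) = match th s n with Some u => u | None => tvar s n end.
Hypothesis hat_tapp : forall th s t (u : term (Arr s t)) (w : term s),
  hat th t (tapp u w) = tapp (hat th _ u) (hat th _ w).
Hypothesis hat_beta : forall th s t n (u : term t) (w : term s),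
  nf t (tapp (hat th _ (tlam s n u)) w) = nf t (hat (supd th n w) t u).

Lemma vrel_beta_expand th s t n (u : term t) (w : term s) x :
  vrel (hat (supd th n w) t u) x -> vrel (tapp (hat th _ (tlam s n u)) w) x.
Proof.
move=> Hx; apply: (proj2 (vrel_nf _ _ _)).
by rewrite hat_beta; apply: (proj1 (vrel_nf _ _ _)).
Qed.

Definition subst_related (th : subst B) (I : assignment (vframe vsb)) :=
  forall s n, vrel (hat th s (tvar s n)) (proj1_sig (I s n)).

Lemma subst_related_upd th I s n (w : term s) (a : Dval s) :
  subst_related th I -> vrel w (proj1_sig a) ->
  subst_related (supd th n w) (aupd I n a).
Proof.
move=> Hrel Hw s0 m; move: (Hrel s0 m); rewrite !hat_var /supd /aupd.
case: (ty_eq_dec s s0) => [e|//]; subst s0.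
by case: (Nat.eqb m n).
Qed.

Lemma evalP_subst_vrel (s : ty B) (u : term s) th I :
  subst_related th I ->
  exists v : Dval s, evalP I u v /\ vrel (hat th s u) (proj1_sig v).
Proof.
elim: u th I => [s0 n|s0 t u1 IH1 u2 IH2|s0 t n u1 IH] th I Hrel.
- by exists (I s0 n); split.
- have [f [Hf Hff]] := IH1 th I Hrel.
  have [a [Ha Haa]] := IH2 th I Hrel.
  exists (Dapp f a); split; first by exists f, a.
  by rewrite hat_tapp; exact: Hff.
- have Hbody (a : Dval s0) (w : term s0) : vrel w (proj1_sig a) ->
      exists v, evalP (aupd I n a) u1 v /\
                vrel (hat (supd th n w) t u1) (proj1_sig v).
    by move=> Hw; apply: IH; exact: subst_related_upd.
  have [g Hg] : exists g : Dval s0 -> Dval t,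
      forall a, evalP (aupd I n a) u1 (g a).
    apply: (choice (fun a => evalP (aupd I n a) u1)) => a.
    have [w Hw] := proj2_sig a.
    by have [v [Hv _]] := Hbody a w Hw; exists v.
  have Hlam : vrel (hat th _ (tlam s0 n u1)) g.
    move=> w a Hw; apply: vrel_beta_expand.
    have [v [Hv Hvv]] := Hbody a w Hw.
    by rewrite (evalP_functional (Hg a) Hv).
  have Hg_range : exists f : term (Arr s0 t), vrel f g.
    by exists (hat th _ (tlam s0 n u1)).
  by exists (exist _ g Hg_range); split.
Qed.

End SubstitutionLemma.

Theorem lemma3p3 (B : countType)
  (nf : forall s : ty B, term s -> term s)
  (hat : subst B -> forall s : ty B, term s -> term s)
  (Hnf : is_normalization nf) (Hhat : is_subst_ext nf hat)
  (V : B -> Type) (vsb : forall b : B, term (Base b) -> V b -> Prop)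
  (Hvs : value_system vsb nf)
  (I : assignment (vframe vsb)) (HI : admissible I)
  (th : subst B)
  (Hth : forall (s : ty B) (n : nat) (u : term s),
           th s n = Some u -> vrel (vsb:=vsb) u (proj1_sig (I s n))) :
  forall (s : ty B) (u : term s),
    exists v : fdom (vframe vsb) s,
      evalP I u v /\ vrel (vsb:=vsb) (hat th s u) (proj1_sig v).
Proof.
case: Hnf => _ [nf_tapp_nf _]; case: Hhat => [hat_var [hat_tapp [hat_beta _]]].
move=> s u.
apply: (@evalP_subst_vrel _ _ _ _ nf_tapp_nf Hvs _ hat_var hat_tapp hat_beta).
move=> s0 n; rewrite hat_var.
by case E: (th s0 n) => [w|]; [exact: Hth | exact: HI].
Qed.
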